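(* For $x=(x_n)_{n\ge1}\in\ell^{1,1/2}$ define $$Q(x):=\sum_{n\ge1}n x_n^2+2\sum_{n\ge1}n x_n\sum_{k>n}x_k .$$ Then $Q$ is well defined (the series converge absolutely) on $\ell^{1,1/2}$, it is positive semidefinite, i.e. $Q(x)\ge0$ for all $x\in\ell^{1,1/2}$, it satisfies $|Q(x)|\le 2\|x\|_{\ell^{1,1/2}}^2$ for all $x\in\ell^{1,1/2}$, and $$\inf\{Q(x): x\in\ell^{1,1/2},\ \|x\|_{\ell^{1,1/2}}=1\}=0,$$ so $Q$ is not positive definite (in the sense of being bounded below by a positive multiple of $\|x\|^2_{\ell^{1,1/2}}$).
   Context: $\ell^{1,1/2}$ denotes the space of real sequences $x=(x_n)_{n\ge1}$ with $\|x\|_{\ell^{1,1/2}}:=\sum_{n\ge1}\sqrt n\,|x_n|<\infty$. *)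

From Stdlib Require Import Reals.
From Coquelicot Require Import Coquelicot.
Open Scope R_scope.

(* Convention: a real sequence (x_n)_{n>=1} is represented by x : nat -> R
   with x k standing for x_{k+1}; the weight of index k is thus (k+1). *)

Definition in_l1half (x : nat -> R) : Prop :=
  ex_series (fun k => sqrt (INR (S k)) * Rabs (x k)).

Definition l1half_norm (x : nat -> R) : R :=
  Series (fun k => sqrt (INR (S k)) * Rabs (x k)).

Definition tail_sum (x : nat -> R) (k : nat) : R :=
  Series (fun j => x (S k + j)%nat).

Definition Qform (x : nat -> R) : R :=
  Series (fun k => INR (S k) * (x k) ^ 2)
  + 2 * Series (fun k => INR (S k) * x k * tail_sum x k).

(* Write S_k = sum_{j>=k} x_j for the tails of x and U_k = sum_{j>=k} sqrt j |x_j|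
   for the tails of the norm series.  Two elementary facts drive everything:
   - Domination.  sqrt k |S_k| <= U_k, hence the k-th summand of Q is bounded
     in absolute value by the telescoping term U_k^2 - U_{k+1}^2; so every
     series converges absolutely and |Q(x)| <= U_1^2 = ||x||^2.
   - Abel summation.  With c_k = (k-1) S_k^2, the k-th summand of Q equals
     (c_k - c_{k+1}) + S_k^2, and c_k -> 0; hence Q(x) = sum_k S_k^2 >= 0.
   Finally, for the finitely supported x^M whose tails are S_k = (-1)^k for
   k = 1..M and 0 beyond, Q(x^M) = M while ||x^M|| >= M, so the normalised
   vectors x^M / ||x^M|| lie on the unit sphere with Q <= 1/M: the
   infimum of Q over the unit sphere is 0 and Q is not bounded below by any
   positive multiple of ||x||^2.

   Sequences are indexed from 0, so x k stands
   for x_{k+1} and carries the weight k+1. *)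

From Stdlib Require Import Reals Lra Lia Psatz.
From Coquelicot Require Import Coquelicot.
Open Scope R_scope.

Lemma series_tail_lim0 (a : nat -> R) :
  ex_series a -> is_lim_seq (fun k => Series (fun j => a (k + j)%nat)) 0.
Proof.
  intros Ha. apply is_lim_seq_incr_1.
  apply is_lim_seq_ext with (fun k => Series a - sum_n a k).
  { intros k. rewrite (Series_incr_n a (S k)) by (auto; lia).
    simpl pred. rewrite sum_n_Reals. ring. }
  replace 0 with (Series a - Series a) by ring.
  apply is_lim_seq_minus'; [apply is_lim_seq_const | exact (Series_correct a Ha)].
Qed.

Lemma is_series_from_partial_sums (a : nat -> R) (l : R) :
  is_lim_seq (sum_n a) l -> is_series a l.
Proof. intros Hlim. exact Hlim. Qed.

Lemma telescoping_series (a : nat -> R) :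
  is_lim_seq a 0 -> is_series (fun k => a k - a (S k)) (a 0%nat).
Proof.
  intros Ha.
  assert (Partial : forall n, sum_n (fun k => a k - a (S k)) n = a 0%nat - a (S n)).
  { induction n as [|n IH]; [now rewrite sum_O|].
    rewrite sum_Sn, IH. unfold plus; simpl. ring. }
  apply is_series_from_partial_sums.
  apply (is_lim_seq_ext (fun n => a 0%nat - a (S n))); [intros n; now rewrite Partial|].
  replace (Finite (a 0%nat)) with (Finite (a 0%nat - 0)) by (f_equal; ring).
  apply is_lim_seq_minus'; [apply is_lim_seq_const | exact (proj1 (is_lim_seq_incr_1 a 0) Ha)].
Qed.

Lemma finite_support_series (a : nat -> R) (M : nat) :
  (forall k, (M < k)%nat -> a k = 0) -> is_series a (sum_n a M).
Proof.
  intros Hsupp.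
  assert (Stable : forall n, sum_n a (M + n) = sum_n a M).
  { induction n as [|n IH]; [now rewrite Nat.add_0_r|].
    rewrite Nat.add_succ_r, sum_Sn, IH, Hsupp by lia. unfold plus; simpl. ring. }
  apply is_series_from_partial_sums.
  apply (is_lim_seq_ext_loc (fun _ => sum_n a M)); [|apply is_lim_seq_const].
  exists M. intros n Hn. replace n with (M + (n - M))%nat by lia. now rewrite Stable.
Qed.

Lemma Series_ge0 (a : nat -> R) : (forall n, 0 <= a n) -> ex_series a -> 0 <= Series a.
Proof.
  intros Hpos Ha. replace 0 with (0 * Series a) by ring. rewrite <- Series_scal_l.
  apply Series_le; [intros n; specialize (Hpos n); lra | exact Ha].
Qed.

Lemma sqrt_weight_ge1 (k : nat) : 1 <= sqrt (INR (S k)).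
Proof.
  rewrite <- sqrt_1. apply sqrt_le_1_alt. rewrite S_INR. pose proof (pos_INR k). lra.
Qed.

Lemma sqrt_weight_le (k m : nat) : (k <= m)%nat -> sqrt (INR (S k)) <= sqrt (INR (S m)).
Proof. intros Hkm. apply sqrt_le_1_alt, le_INR. lia. Qed.

Lemma weight_sqrt_sq (k : nat) : INR (S k) = sqrt (INR (S k)) * sqrt (INR (S k)).
Proof. rewrite sqrt_sqrt; [reflexivity | apply pos_INR]. Qed.

(* The terms sqrt(k+1)|x_k| of the norm series, their tails U_k, and the tails
   S_k of x itself; note that tail_sum x k is tail x (S k) by definition. *)
Definition norm_term (x : nat -> R) (k : nat) : R := sqrt (INR (S k)) * Rabs (x k).
Definition norm_tail (x : nat -> R) (k : nat) : R := Series (fun j => norm_term x (k + j)%nat).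
Definition tail (x : nat -> R) (k : nat) : R := Series (fun j => x (k + j)%nat).

Lemma abs_le_norm_term (x : nat -> R) (k : nat) : Rabs (x k) <= norm_term x k.
Proof. unfold norm_term. pose proof (sqrt_weight_ge1 k). pose proof (Rabs_pos (x k)). nra. Qed.

(* The two families of summands of Q, and the sequence c_k = (k-1) S_k^2 used
   for Abel summation. *)
Definition Qdiag (x : nat -> R) (k : nat) : R := INR (S k) * x k ^ 2.
Definition Qoff (x : nat -> R) (k : nat) : R := INR (S k) * x k * tail_sum x k.
Definition abel_term (x : nat -> R) (k : nat) : R := INR k * tail x k ^ 2.

Lemma Qdiag_bound (x : nat -> R) (k : nat) : Rabs (Qdiag x k) <= norm_term x k ^ 2.
Proof.
  unfold Qdiag, norm_term.
  rewrite Rabs_mult, Rabs_right by (apply Rle_ge, pos_INR).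
  rewrite <- RPow_abs, (weight_sqrt_sq k) at 1. right; ring.
Qed.

Section Membership.

Variable x : nat -> R.
Hypothesis Hx : in_l1half x.

Lemma ex_norm_term_shift (k : nat) : ex_series (fun j => norm_term x (k + j)%nat).
Proof. exact (proj1 (ex_series_incr_n (norm_term x) k) Hx). Qed.

Lemma ex_abs_shift (k : nat) : ex_series (fun j => Rabs (x (k + j)%nat)).
Proof.
  apply (ex_series_le (fun j => Rabs (x (k + j)%nat)) (fun j => norm_term x (k + j)%nat));
    [|apply ex_norm_term_shift].
  intros n. rewrite Rabs_Rabsolu. apply abs_le_norm_term.
Qed.

Lemma tail_step (k : nat) : tail x k = x k + tail x (S k).
Proof.
  unfold tail. rewrite Series_incr_1 by exact (ex_series_Rabs _ (ex_abs_shift k)).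
  rewrite Nat.add_0_r. f_equal. apply Series_ext. intros n. f_equal. lia.
Qed.

Lemma norm_tail_step (k : nat) : norm_tail x k = norm_term x k + norm_tail x (S k).
Proof.
  unfold norm_tail. rewrite Series_incr_1 by apply ex_norm_term_shift.
  rewrite Nat.add_0_r. f_equal. apply Series_ext. intros n. f_equal. lia.
Qed.

Lemma norm_tail_lim0 : is_lim_seq (norm_tail x) 0.
Proof. exact (series_tail_lim0 _ Hx). Qed.

(* Key estimate: sqrt(k+1) |S_k| <= U_k, as the weights increase along the tail. *)
Lemma weighted_tail_bound (k : nat) : sqrt (INR (S k)) * Rabs (tail x k) <= norm_tail x k.
Proof.
  apply Rle_trans with (sqrt (INR (S k)) * Series (fun j => Rabs (x (k + j)%nat))).
  { apply Rmult_le_compat_l; [apply sqrt_pos | exact (Series_Rabs _ (ex_abs_shift k))]. }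
  unfold norm_tail. rewrite <- Series_scal_l. apply Series_le; [|apply ex_norm_term_shift].
  intros n. split.
  - apply Rmult_le_pos; [apply sqrt_pos | apply Rabs_pos].
  - apply Rmult_le_compat_r; [apply Rabs_pos | apply sqrt_weight_le; lia].
Qed.

Lemma norm_tail_sq_telescopes :
  is_series (fun k => norm_tail x k ^ 2 - norm_tail x (S k) ^ 2) (l1half_norm x ^ 2).
Proof.
  change (l1half_norm x) with (norm_tail x 0).
  apply (telescoping_series (fun k => norm_tail x k ^ 2)).
  replace (Finite 0) with (Finite (0 * 0)) by (f_equal; ring).
  apply (is_lim_seq_ext (fun k => norm_tail x k * norm_tail x k)); [intros; ring|].
  apply is_lim_seq_mult'; apply norm_tail_lim0.
Qed.

Lemma Qoff_bound (k : nat) : Rabs (Qoff x k) <= norm_term x k * norm_tail x (S k).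
Proof.
  unfold Qoff, norm_term, tail_sum. fold (tail x (S k)).
  rewrite !Rabs_mult, (Rabs_right (INR (S k))) by (apply Rle_ge, pos_INR).
  rewrite (weight_sqrt_sq k) at 1.
  assert (Htail : sqrt (INR (S k)) * Rabs (tail x (S k)) <= norm_tail x (S k)).
  { eapply Rle_trans; [|apply weighted_tail_bound].
    apply Rmult_le_compat_r; [apply Rabs_pos | apply sqrt_weight_le; lia]. }
  pose proof (sqrt_pos (INR (S k))). pose proof (Rabs_pos (x k)).
  replace (sqrt (INR (S k)) * sqrt (INR (S k)) * Rabs (x k) * Rabs (tail x (S k)))
    with (sqrt (INR (S k)) * Rabs (x k) * (sqrt (INR (S k)) * Rabs (tail x (S k)))) by ring.
  apply Rmult_le_compat_l; [nra | exact Htail].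
Qed.

Lemma Qterms_dominated (k : nat) :
  Rabs (Qdiag x k) + 2 * Rabs (Qoff x k) <= norm_tail x k ^ 2 - norm_tail x (S k) ^ 2.
Proof.
  replace (norm_tail x k ^ 2 - norm_tail x (S k) ^ 2)
    with (norm_term x k ^ 2 + 2 * (norm_term x k * norm_tail x (S k)))
    by (rewrite (norm_tail_step k); ring).
  pose proof (Qdiag_bound x k). pose proof (Qoff_bound k). lra.
Qed.

Lemma ex_abs_dominated (a : nat -> R) :
  (forall k, Rabs (a k) <= norm_tail x k ^ 2 - norm_tail x (S k) ^ 2) ->
  ex_series (fun k => Rabs (a k)).
Proof.
  intros Hdom.
  apply (ex_series_le (fun k => Rabs (a k)) (fun k => norm_tail x k ^ 2 - norm_tail x (S k) ^ 2)).
  - intros k. rewrite Rabs_Rabsolu. apply Hdom.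
  - eexists. apply norm_tail_sq_telescopes.
Qed.

Lemma ex_Qdiag_abs : ex_series (fun k => Rabs (Qdiag x k)).
Proof.
  apply ex_abs_dominated. intros k.
  pose proof (Qterms_dominated k). pose proof (Rabs_pos (Qoff x k)). lra.
Qed.

Lemma ex_Qoff_abs : ex_series (fun k => Rabs (Qoff x k)).
Proof.
  apply ex_abs_dominated. intros k.
  pose proof (Qterms_dominated k).
  pose proof (Rabs_pos (Qdiag x k)). pose proof (Rabs_pos (Qoff x k)). lra.
Qed.

Lemma Qterm_abs_dominated (k : nat) :
  Rabs (Qdiag x k + 2 * Qoff x k) <= norm_tail x k ^ 2 - norm_tail x (S k) ^ 2.
Proof.
  pose proof (Rabs_triang (Qdiag x k) (2 * Qoff x k)).
  rewrite Rabs_mult, (Rabs_right 2) in H by lra. pose proof (Qterms_dominated k). lra.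
Qed.

Lemma Qform_as_series : Qform x = Series (fun k => Qdiag x k + 2 * Qoff x k).
Proof.
  unfold Qform. rewrite Series_plus, Series_scal_l; [reflexivity| |].
  - exact (ex_series_Rabs _ ex_Qdiag_abs).
  - apply (ex_series_scal_l 2 (Qoff x)). exact (ex_series_Rabs _ ex_Qoff_abs).
Qed.

Lemma Qform_abs_le : Rabs (Qform x) <= l1half_norm x ^ 2.
Proof.
  rewrite Qform_as_series.
  eapply Rle_trans; [apply Series_Rabs, ex_abs_dominated, Qterm_abs_dominated|].
  rewrite <- (is_series_unique _ _ norm_tail_sq_telescopes).
  apply Series_le; [|eexists; apply norm_tail_sq_telescopes].
  intros k. split; [apply Rabs_pos | apply Qterm_abs_dominated].
Qed.

Lemma Qterm_abel (k : nat) :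
  Qdiag x k + 2 * Qoff x k = (abel_term x k - abel_term x (S k)) + tail x k ^ 2.
Proof.
  unfold Qdiag, Qoff, abel_term, tail_sum. fold (tail x (S k)).
  rewrite (tail_step k), S_INR. ring.
Qed.

(* c_k -> 0, since 0 <= c_k <= (sqrt(k+1) |S_k|)^2 <= U_k^2. *)
Lemma abel_term_lim0 : is_lim_seq (abel_term x) 0.
Proof.
  apply (is_lim_seq_le_le (fun _ => 0) _ (fun k => norm_tail x k * norm_tail x k)).
  - intros k. unfold abel_term.
    pose proof (pos_INR k). pose proof (pow2_ge_0 (tail x k)). split; [nra|].
    assert (Hw : 0 <= sqrt (INR (S k)) * Rabs (tail x k))
      by (apply Rmult_le_pos; [apply sqrt_pos | apply Rabs_pos]).
    pose proof (weighted_tail_bound k) as Hb.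
    apply Rle_trans with ((sqrt (INR (S k)) * Rabs (tail x k)) ^ 2).
    + rewrite Rpow_mult_distr, pow2_sqrt, pow2_abs by apply pos_INR.
      rewrite S_INR. nra.
    + replace ((sqrt (INR (S k)) * Rabs (tail x k)) ^ 2)
        with ((sqrt (INR (S k)) * Rabs (tail x k)) * (sqrt (INR (S k)) * Rabs (tail x k))) by ring.
      now apply Rmult_le_compat.
  - apply is_lim_seq_const.
  - replace (Finite 0) with (Finite (0 * 0)) by (f_equal; ring).
    apply is_lim_seq_mult'; apply norm_tail_lim0.
Qed.

Lemma Qform_sum_of_squares : is_series (fun k => tail x k ^ 2) (Qform x).
Proof.
  assert (Hterms : is_series (fun k => Qdiag x k + 2 * Qoff x k) (Qform x)).
  { rewrite Qform_as_series. apply Series_correct, ex_series_Rabs.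
    apply ex_abs_dominated, Qterm_abs_dominated. }
  pose proof (is_series_minus _ _ _ _ Hterms (telescoping_series _ abel_term_lim0)) as Hdiff.
  replace (Qform x) with (plus (Qform x) (opp (abel_term x 0))).
  - eapply is_series_ext; [|exact Hdiff]. intros k. simpl.
    rewrite Qterm_abel. unfold plus, opp; simpl. ring.
  - unfold abel_term, plus, opp; simpl. ring.
Qed.

Lemma Qform_ge0 : 0 <= Qform x.
Proof.
  rewrite <- (is_series_unique _ _ Qform_sum_of_squares).
  apply Series_ge0; [intros; apply pow2_ge_0 | eexists; apply Qform_sum_of_squares].
Qed.

End Membership.

Lemma in_l1half_scal (c : R) (x : nat -> R) : in_l1half x -> in_l1half (fun k => c * x k).
Proof.
  intros Hx. unfold in_l1half.
  apply (ex_series_ext (fun k => Rabs c * (sqrt (INR (S k)) * Rabs (x k)))).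
  - intros n. rewrite Rabs_mult, <- !Rmult_assoc, (Rmult_comm (Rabs c)). reflexivity.
  - exact (ex_series_scal_l (Rabs c) _ Hx).
Qed.

Lemma l1half_norm_scal (c : R) (x : nat -> R) :
  l1half_norm (fun k => c * x k) = Rabs c * l1half_norm x.
Proof.
  unfold l1half_norm. rewrite <- Series_scal_l.
  apply Series_ext. intros n. rewrite Rabs_mult. ring.
Qed.

Lemma Qform_scal (c : R) (x : nat -> R) : Qform (fun k => c * x k) = c ^ 2 * Qform x.
Proof.
  assert (Htail : forall k, tail_sum (fun j => c * x j) k = c * tail_sum x k)
    by (intros k; apply Series_scal_l).
  unfold Qform.
  rewrite (Series_ext (fun k => INR (S k) * (c * x k) ^ 2)
                      (fun k => c ^ 2 * (INR (S k) * x k ^ 2))) by (intros; ring).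
  rewrite (Series_ext (fun k => INR (S k) * (c * x k) * tail_sum (fun j => c * x j) k)
                      (fun k => c ^ 2 * (INR (S k) * x k * tail_sum x k)))
    by (intros; rewrite Htail; ring).
  rewrite !Series_scal_l. ring.
Qed.

(* The extremal family: x^M is the finitely supported sequence whose tails are
   S_k = (-1)^k for k <= M and 0 beyond, i.e. x^M_k = S_k - S_{k+1}. *)
Definition alt_sign (M k : nat) : R := if (k <=? M)%nat then (-1) ^ k else 0.
Definition alt_diff (M k : nat) : R := alt_sign M k - alt_sign M (S k).

Lemma alt_sign_zero (M k : nat) : (M < k)%nat -> alt_sign M k = 0.
Proof. intros Hk. unfold alt_sign. destruct (Nat.leb_spec k M); [lia | reflexivity]. Qed.

Lemma alt_sign_sq (M k : nat) : (k <= M)%nat -> alt_sign M k ^ 2 = 1.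
Proof.
  intros Hk. unfold alt_sign. destruct (Nat.leb_spec k M); [|lia].
  rewrite <- pow2_abs, pow_1_abs. ring.
Qed.

Lemma alt_diff_zero (M k : nat) : (M < k)%nat -> alt_diff M k = 0.
Proof. intros Hk. unfold alt_diff. rewrite !alt_sign_zero by lia. ring. Qed.

(* On its support, |x^M_k| is 2 (or 1 at the last index). *)
Lemma alt_diff_abs_ge1 (M k : nat) : (k <= M)%nat -> 1 <= Rabs (alt_diff M k).
Proof.
  intros Hk. unfold alt_diff, alt_sign. destruct (Nat.leb_spec k M); [|lia].
  destruct (Nat.leb_spec (S k) M).
  - replace ((-1) ^ k - (-1) ^ S k) with (2 * (-1) ^ k) by (simpl; ring).
    rewrite Rabs_mult, pow_1_abs, Rabs_right by lra. lra.
  - rewrite Rminus_0_r, pow_1_abs. lra.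
Qed.

Lemma norm_term_alt_diff_zero (M k : nat) : (M < k)%nat -> norm_term (alt_diff M) k = 0.
Proof. intros Hk. unfold norm_term. rewrite alt_diff_zero, Rabs_R0 by exact Hk. ring. Qed.

Lemma alt_diff_in_l1half (M : nat) : in_l1half (alt_diff M).
Proof. eexists. exact (finite_support_series _ M (norm_term_alt_diff_zero M)). Qed.

Lemma alt_diff_norm_ge (M : nat) : INR (S M) <= l1half_norm (alt_diff M).
Proof.
  change (l1half_norm (alt_diff M)) with (Series (norm_term (alt_diff M))).
  rewrite (is_series_unique _ _ (finite_support_series _ M (norm_term_alt_diff_zero M))).
  rewrite <- (Rmult_1_r (INR (S M))), <- sum_n_const, !sum_n_Reals.
  apply sum_Rle. intros k Hk.
  eapply Rle_trans; [apply alt_diff_abs_ge1, Hk | apply abs_le_norm_term].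
Qed.

Lemma tail_alt_diff (M k : nat) : tail (alt_diff M) k = alt_sign M k.
Proof.
  apply is_series_unique. unfold alt_diff.
  apply (is_series_ext (fun j => alt_sign M (k + j)%nat - alt_sign M (k + S j)%nat));
    [intros n; now rewrite Nat.add_succ_r|].
  replace (alt_sign M k) with (alt_sign M (k + 0)%nat) by now rewrite Nat.add_0_r.
  apply (telescoping_series (fun j => alt_sign M (k + j)%nat)).
  apply (is_lim_seq_ext_loc (fun _ => 0)); [|apply is_lim_seq_const].
  exists (S M). intros n Hn. now rewrite alt_sign_zero by lia.
Qed.

Lemma Qform_alt_diff (M : nat) : Qform (alt_diff M) = INR (S M).
Proof.
  rewrite <- (is_series_unique _ _ (Qform_sum_of_squares _ (alt_diff_in_l1half M))).
  rewrite (Series_ext _ (fun k => alt_sign M k ^ 2)) by (intros; now rewrite tail_alt_diff).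
  assert (Hsupp : forall k, (M < k)%nat -> alt_sign M k ^ 2 = 0)
    by (intros k Hk; rewrite alt_sign_zero by exact Hk; ring).
  rewrite (is_series_unique _ _ (finite_support_series _ M Hsupp)).
  rewrite (sum_n_ext_loc _ (fun _ => 1) M) by (intros; now apply alt_sign_sq).
  rewrite sum_n_const. ring.
Qed.

Lemma unit_vector_small_Q (M : nat) :
  exists y, in_l1half y /\ l1half_norm y = 1 /\ Qform y <= / INR (S M).
Proof.
  set (N := l1half_norm (alt_diff M)).
  assert (HM : 0 < INR (S M)) by apply lt_0_INR, Nat.lt_0_succ.
  assert (HN : INR (S M) <= N) by apply alt_diff_norm_ge.
  exists (fun k => / N * alt_diff M k). split; [|split].
  - apply in_l1half_scal, alt_diff_in_l1half.
  - rewrite l1half_norm_scal. fold N. rewrite Rabs_right by (apply Rle_ge, Rlt_le, Rinv_0_lt_compat; lra).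
    field. lra.
  - rewrite Qform_scal, Qform_alt_diff.
    apply Rle_trans with ((/ N) ^ 2 * N); [apply Rmult_le_compat_l; [apply pow2_ge_0 | exact HN]|].
    replace ((/ N) ^ 2 * N) with (/ N) by (field; lra).
    apply Rinv_le_contravar; lra.
Qed.

Lemma Qform_unit_sphere_glb :
  is_glb_Rbar (fun q : R => exists x : nat -> R,
                  in_l1half x /\ l1half_norm x = 1 /\ q = Qform x) (Finite 0).
Proof.
  split.
  - intros q [x [Hx [_ ->]]]. exact (Qform_ge0 x Hx).
  - intros [r| |] Hlower; simpl; [| |exact I].
    + destruct (Rle_or_lt r 0) as [Hr|Hr]; [exact Hr|exfalso].
      destruct (archimed_cor1 r Hr) as [M [HM HMpos]].
      destruct (unit_vector_small_Q M) as [y [Hy [Hnorm HQ]]].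
      assert (Hry : Rbar_le r (Qform y)) by (apply Hlower; now exists y). simpl in Hry.
      assert (/ INR (S M) < / INR M).
      { apply Rinv_lt_contravar; [apply Rmult_lt_0_compat|]; apply lt_INR || apply lt_0_INR; lia. }
      lra.
    + destruct (unit_vector_small_Q 0) as [y [Hy [Hnorm _]]].
      exact (Hlower (Qform y) (ex_intro _ y (conj Hy (conj Hnorm eq_refl)))).
Qed.

Theorem proposition2p2 :
  (* well-definedness: all series converge absolutely *)
  (forall x : nat -> R, in_l1half x ->
     (forall k : nat, ex_series (fun j => Rabs (x (S k + j)%nat))) /\
     ex_series (fun k => Rabs (INR (S k) * (x k) ^ 2)) /\
     ex_series (fun k => Rabs (INR (S k) * x k * tail_sum x k))) /\
  (* positive semidefinite *)
  (forall x : nat -> R, in_l1half x -> 0 <= Qform x) /\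
  (* boundedness *)
  (forall x : nat -> R, in_l1half x -> Rabs (Qform x) <= 2 * (l1half_norm x) ^ 2) /\
  (* infimum over the unit sphere is 0 *)
  is_glb_Rbar (fun q : R => exists x : nat -> R,
                  in_l1half x /\ l1half_norm x = 1 /\ q = Qform x) (Finite 0) /\
  (* hence not positive definite *)
  ~ (exists c : R, 0 < c /\
       forall x : nat -> R, in_l1half x -> c * (l1half_norm x) ^ 2 <= Qform x).
Proof.
  split; [|split; [|split; [|split]]].
  - intros x Hx. split; [|split].
    + intros k. exact (ex_abs_shift x Hx (S k)).
    + exact (ex_Qdiag_abs x Hx).
    + exact (ex_Qoff_abs x Hx).
  - exact Qform_ge0.
  - intros x Hx. pose proof (Qform_abs_le x Hx). pose proof (pow2_ge_0 (l1half_norm x)). lra.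
  - exact Qform_unit_sphere_glb.
  - (* a coercivity constant c would be a positive lower bound on the unit sphere *)
    intros [c [Hc Hcoercive]].
    assert (Hlower : Rbar_le c 0).
    { apply (proj2 Qform_unit_sphere_glb). intros q [x [Hx [Hnorm ->]]]. simpl.
      specialize (Hcoercive x Hx). rewrite Hnorm in Hcoercive. lra. }
    simpl in Hlower. lra.
Qed.
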